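(* For every integer $k\ge 1$, let $a^{(k)}_n=|S_n(123,\,213,\,1(k+1)k(k-1)\cdots 2)|$ for $n\ge 0$, with $a^{(k)}_0=1$ counting the empty permutation. Then $$\sum_{n\ge 0} a^{(k)}_n x^n=\frac{1-x}{1-2x+x^{k+1}}.$$ (In particular, for $k=3$ this equals $\frac{1}{1-x-x^2-x^3}$, the generating function of the Tribonacci numbers $1,1,2,4,7,13,24,\dots$.) *)

From HB Require Import structures.
From mathcomp Require Import all_boot all_order all_algebra all_fingroup.
Set Implicit Arguments. Unset Strict Implicit. Unset Printing Implicit Defensive.
Import Order.TTheory GRing.Theory Num.Theory.

(* A permutation p of {0,..,n-1} (one-line notation p 0, ..., p (n-1))
   contains the pattern q (given in one-line notation as a list of
   distinct naturals, e.g. [:: 2; 1; 3] for 213) iff there are positions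
   f 0 < f 1 < ... < f (m-1) such that the subsequence p (f 0) ... p (f (m-1))
   is order-isomorphic to q. *)
Definition contains (n : nat) (p : 'S_n) (q : seq nat) : bool :=
  [exists f : {ffun 'I_(size q) -> 'I_n},
    [forall i : 'I_(size q), forall j : 'I_(size q),
       ((i < j)%N ==> (f i < f j)%N) &&
       ((p (f i) < p (f j))%N == (nth 0 q i < nth 0 q j)%N)]].

Definition avoids (n : nat) (p : 'S_n) (q : seq nat) : bool := ~~ contains p q.

Definition pat123 : seq nat := [:: 1; 2; 3].
Definition pat213 : seq nat := [:: 2; 1; 3].
Definition patk (k : nat) : seq nat := 1 :: rev (iota 2 k).

Definition a (k n : nat) : nat :=
  #|[set p : 'S_n | [&& avoids p pat123, avoids p pat213 & avoids p (patk k)]]|.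

(* Avoiding 123 and 213 says that no entry has two smaller entries to its
   left.  If such an arrangement of 0, ..., n starts with x, the entries above x
   must precede those below x and appear in decreasing order, so the word is
   x, n, n-1, ..., x+1 followed by an arrangement of 0, ..., x-1 of the same
   kind; avoiding 1(k+1)k...2 then means exactly n - x < k.  Hence
   a_(n+1) = a_n + ... + a_(n+1-k), and multiplying the series by
   1 - 2x + x^(k+1) telescopes this window sum to 1 - x. *)

From HB Require Import structures.
From mathcomp Require Import all_boot all_order all_algebra all_fingroup.
From mathcomp Require Import zify.
Set Implicit Arguments. Unset Strict Implicit. Unset Printing Implicit Defensive.

Section PermWord.
Variable n : nat.

Definition perm_word (p : 'S_n) : seq nat := [seq val (p i) | i <- enum 'I_n].

Lemma size_perm_word p : size (perm_word p) = n.
Proof. by rewrite size_map size_enum_ord. Qed.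

Lemma nth_perm_word p (i : 'I_n) : nth 0 (perm_word p) i = p i.
Proof. by rewrite (nth_map i) ?size_enum_ord // nth_ord_enum. Qed.

Lemma perm_word_iota p : perm_eq (perm_word p) (iota 0 n).
Proof.
rewrite /perm_word; apply: uniq_perm.
- by rewrite map_inj_uniq ?enum_uniq // => i j /val_inj/perm_inj.
- exact: iota_uniq.
move=> y; rewrite mem_iota leq0n add0n /=; apply/mapP/idP => [[i _ ->] // | lt_y_n].
by exists ((p^-1)%g (Ordinal lt_y_n)); rewrite ?mem_enum ?permKV.
Qed.

Lemma perm_word_inj : injective perm_word.
Proof.
by move=> p q eq_pq; apply/permP => i; apply: val_inj; rewrite /= -!nth_perm_word eq_pq.
Qed.

Lemma perm_word_surj w : perm_eq w (iota 0 n) -> exists p, perm_word p = w.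
Proof.
move=> w_perm; have size_w : size w = n by rewrite (perm_size w_perm) size_iota.
have w_uniq : uniq w by rewrite (perm_uniq w_perm) iota_uniq.
have lt_w_n (i : 'I_n) : nth 0 w i < n.
  have : nth 0 w i \in w by rewrite mem_nth ?size_w.
  by rewrite (perm_mem w_perm) mem_iota.
have f_inj : injective (fun i => Ordinal (lt_w_n i)).
  by move=> i j [] /eqP; rewrite nth_uniq ?size_w // => /eqP/val_inj.
exists (perm f_inj); apply: (@eq_from_nth _ 0); rewrite size_perm_word // => i lt_i_n.
by rewrite (nth_perm_word _ (Ordinal lt_i_n)) permE.
Qed.

End PermWord.

Definition order_iso (t q : seq nat) :=
  size t = size q /\ forall i j, i < size q -> j < size q ->
    (nth 0 t i < nth 0 t j) = (nth 0 q i < nth 0 q j).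

Definition occurs (q w : seq nat) := exists2 t, subseq t w & order_iso t q.

Lemma incr_index_subseq (w : seq nat) m (F : nat -> nat) :
    (forall i j, i < j -> j < m -> F i < F j) -> (forall i, i < m -> F i < size w) ->
  subseq [seq nth 0 w (F i) | i <- iota 0 m] w.
Proof.
elim: m w => [|m IH] w F_incr F_lt; first exact: sub0seq.
have F_lt_Fm i : i < m -> F i < F m by move=> lt_i_m; apply: F_incr.
rewrite -addn1 iotaD map_cat -[X in subseq _ X](cat_take_drop (F m) w).
apply: cat_subseq.
  rewrite (eq_in_map _ (fun i => nth 0 (take (F m) w) (F i)) _).1; last first.
    by move=> i; rewrite mem_iota => /andP[_ /F_lt_Fm lt_Fi_Fm]; rewrite nth_take.
  apply: IH => [i j lt_ij lt_jm | i lt_i_m]; first by apply: F_incr; lia.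
  by rewrite size_take_min; have := F_lt_Fm i lt_i_m; have := F_lt m; lia.
by rewrite /= sub1seq -[X in nth _ _ X]addn0 -nth_drop mem_nth // size_drop subn_gt0 F_lt.
Qed.

Lemma subseq_incr_index (w t : seq nat) : subseq t w ->
  exists F : nat -> nat, (forall i j, i < j -> j < size t -> F i < F j) /\
    (forall i, i < size t -> F i < size w /\ nth 0 w (F i) = nth 0 t i).
Proof.
elim: w t => [|y w IH] [|x t] //; try by exists id.
rewrite /=; case: eqP => [<- | _] /IH[F [F_incr F_nth]].
  exists (fun i => if i is i'.+1 then (F i').+1 else 0); split.
    by case=> [|i] [|j] //= lt_ij lt_j; rewrite ltnS; apply: F_incr.
  by case=> [|i] //= /F_nth[]; rewrite ltnS.
exists (fun i => (F i).+1); split => [i j lt_ij lt_j | i /F_nth[]]; last by rewrite /= ltnS.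
by rewrite ltnS; apply: F_incr.
Qed.

Lemma containsP n (p : 'S_n) q : contains p q <-> occurs q (perm_word p).
Proof.
split.
- case/existsP => f /forallP f_pat.
  have {}f_pat (i j : 'I_(size q)) : ((i < j) ==> (f i < f j)) &&
      ((p (f i) < p (f j)) == (nth 0 q i < nth 0 q j)) := forallP (f_pat i) j.
  pose F i := if insub i is Some o then val (f o) else 0.
  have FE (o : 'I_(size q)) : F o = f o by rewrite /F valK.
  exists [seq nth 0 (perm_word p) (F i) | i <- iota 0 (size q)].
    apply: incr_index_subseq => [i j lt_ij lt_j | i lt_i].
      have lt_i : i < size q by lia.
      rewrite -[i]/(val (Ordinal lt_i)) -[j]/(val (Ordinal lt_j)) !FE.
      by case/andP: (f_pat (Ordinal lt_i) (Ordinal lt_j)) => /implyP->.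
    by rewrite size_perm_word -[i]/(val (Ordinal lt_i)) FE.
  split=> [|i j lt_i lt_j]; first by rewrite size_map size_iota.
  rewrite !(nth_map 0) ?size_iota // !nth_iota // -[0 + i]/(val (Ordinal lt_i)).
  rewrite -[0 + j]/(val (Ordinal lt_j)) !FE !nth_perm_word.
  by case/andP: (f_pat (Ordinal lt_i) (Ordinal lt_j)) => _ /eqP.
- case=> t /subseq_incr_index[F [F_incr F_nth]] [size_t t_iso].
  rewrite size_t size_perm_word in F_incr F_nth.
  have F_lt (o : 'I_(size q)) : F o < n by case: (F_nth o (ltn_ord o)).
  apply/existsP; exists [ffun o => Ordinal (F_lt o)].
  apply/forallP => i; apply/forallP => j; rewrite !ffunE /=.
  apply/andP; split; first by apply/implyP => /F_incr; apply.
  rewrite -(nth_perm_word p (Ordinal (F_lt i))) -(nth_perm_word p (Ordinal (F_lt j))) /=.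
  by rewrite (F_nth i (ltn_ord i)).2 (F_nth j (ltn_ord j)).2 t_iso.
Qed.

Definition two_smaller_before (w : seq nat) :=
  exists a b c, subseq [:: a; b; c] w /\ a < c /\ b < c.

Definition k_larger_after k (w : seq nat) :=
  exists x t, [/\ subseq (x :: t) w, size t = k & all (ltn x) t].

Definition admissible k w := ~ two_smaller_before w /\ ~ k_larger_after k w.

Lemma occurs3_two_smaller_before q w : size q = 3 ->
  nth 0 q 0 < nth 0 q 2 -> nth 0 q 1 < nth 0 q 2 ->
  occurs q w -> two_smaller_before w.
Proof.
move=> size_q lt02 lt12 [t t_w [size_t t_iso]]; rewrite size_q in size_t t_iso.
case: t size_t t_w t_iso => [|a [|b [|c [|? ?]]]] // _ abc_w t_iso.
by exists a, b, c; rewrite (t_iso 0 2) ?(t_iso 1 2).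
Qed.

Lemma occurs_123_213 w : uniq w ->
  occurs pat123 w \/ occurs pat213 w <-> two_smaller_before w.
Proof.
move=> w_uniq; split=> [[] | [a [b [c [abc_w [lt_ac lt_bc]]]]]];
  try exact: occurs3_two_smaller_before.
have : a != b by have := subseq_uniq abc_w w_uniq; rewrite /= !inE negb_or => /and3P[/andP[]].
case: ltngtP => // [lt_ab | lt_ba] _; [left | right]; exists [:: a; b; c] => //;
  by split=> // -[|[|[|i]]] [|[|[|j]]] //= *; lia.
Qed.

Lemma size_patk k : size (patk k) = k.+1.
Proof. by rewrite /= size_rev size_iota. Qed.

Lemma nth_patkS k i : i < k -> nth 0 (patk k) i.+1 = k.+1 - i.
Proof. by move=> lt_ik; rewrite /= nth_rev size_iota // nth_iota; lia. Qed.

Lemma subseq2_pairwise (T : eqType) (r : rel T) (s : seq T) :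
  (forall b c, subseq [:: b; c] s -> r b c) -> pairwise r s.
Proof.
elim: s => //= y s IH r_s; apply/andP; split.
  by apply/allP => z z_s; apply: r_s; rewrite /= eqxx sub1seq.
by apply: IH => b c bc_s; apply: r_s; apply: subseq_trans bc_s (subseq_cons s y).
Qed.

Lemma occurs_patk k w : uniq w -> ~ two_smaller_before w ->
  occurs (patk k) w <-> k_larger_after k w.
Proof.
move=> w_uniq no_tsb; split.
  case=> t t_w [size_t t_iso]; rewrite size_patk in size_t t_iso.
  case: t size_t t_w t_iso => [|x t] // [size_t] xt_w t_iso.
  exists x, t; split=> //; apply/(all_nthP 0) => i; rewrite size_t => lt_i.
  by have := t_iso 0 i.+1 isT lt_i; rewrite nth_patkS //= => -> /=; lia.
case=> x [t [xt_w size_t t_gt_x]]; exists (x :: t) => //.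
have /andP[_ t_uniq] := subseq_uniq xt_w w_uniq.
have t_decr : pairwise gtn t.
  apply: subseq2_pairwise => b c bc_t.
  have : b != c by have := subseq_uniq bc_t t_uniq; rewrite /= inE andbT.
  have : ~~ (b < c).
    apply/negP => lt_bc; apply: no_tsb; exists x, b, c; split.
      by apply: subseq_trans xt_w; rewrite /= eqxx.
    by split=> //; apply: (allP t_gt_x); apply: (mem_subseq bc_t); rewrite !inE eqxx orbT.
  by rewrite /=; lia.
have t_gt_x_nth i : i < k -> x < nth 0 t i.
  by move=> lt_ik; apply: (all_nthP 0 t_gt_x); rewrite size_t.
have t_decr_nth i j : i < j < k -> nth 0 t j < nth 0 t i.
  by case/andP=> lt_ij lt_jk; apply: (pairwiseP 0 t_decr); rewrite ?inE ?size_t //; lia.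
split=> [|i j]; first by rewrite size_patk /= size_t.
rewrite size_patk => lt_i lt_j.
case: i j lt_i lt_j => [|i] [|j] //; rewrite ?ltnn // !ltnS => lt_i lt_j;
  rewrite ?nth_patkS //=.
- by have := t_gt_x_nth j lt_j; lia.
- by have := t_gt_x_nth i lt_i; lia.
case: (ltngtP i j) => [lt_ij | lt_ji | ->]; last by rewrite !ltnn.
- by have := t_decr_nth i j; lia.
- by have := t_decr_nth j i; lia.
Qed.

Lemma avoidsP k n (p : 'S_n) :
  [&& avoids p pat123, avoids p pat213 & avoids p (patk k)] <-> admissible k (perm_word p).
Proof.
have w_uniq : uniq (perm_word p) by rewrite (perm_uniq (perm_word_iota p)) iota_uniq.
split=> [/and3P[/negP no123 /negP no213 /negP nok] | [no_tsb no_kla]].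
  have no_tsb : ~ two_smaller_before (perm_word p).
    by case/(occurs_123_213 w_uniq) => /containsP.
  by split=> // /(occurs_patk k w_uniq no_tsb)/containsP.
apply/and3P; split; apply/negP => /containsP occ.
- by apply: no_tsb; apply/(occurs_123_213 w_uniq); left.
- by apply: no_tsb; apply/(occurs_123_213 w_uniq); right.
- by apply: no_kla; apply/(occurs_patk k w_uniq no_tsb).
Qed.

Lemma admissible_subseq k v w : subseq v w -> admissible k w -> admissible k v.
Proof.
move=> v_w [no_tsb no_kla]; split=> [[a [b [c [abc_v lt]]]] | [x [t [xt_v kt gt_x]]]].
  by apply: no_tsb; exists a, b, c; split=> //; apply: subseq_trans v_w.
by apply: no_kla; exists x, t; split=> //; apply: subseq_trans v_w.
Qed.

Lemma admissible_nil k : admissible k [::].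
Proof. by split=> [[a [b [c []]]] | [x [t []]]]. Qed.

Lemma gtn_trans : transitive gtn.
Proof. by move=> y x z /= lt_yx lt_zy; apply: ltn_trans lt_zy lt_yx. Qed.

Lemma subseq_cat_split (T : eqType) (s d v : seq T) : subseq s (d ++ v) ->
  exists s1 s2, [/\ s = s1 ++ s2, subseq s1 d & subseq s2 v].
Proof.
elim: d s => [|y d IH] s /=; first by exists [::], s.
case: s => [|x s]; first by exists [::], [::]; rewrite !sub0seq.
case: eqP => [-> | _] /IH[s1 [s2 [-> s1_d s2_v]]]; first by exists (y :: s1), s2; rewrite /= eqxx.
by exists s1, s2; split=> //; apply: subseq_trans s1_d (subseq_cons d y).
Qed.

Section BlockCat.
Variables (t : nat) (d v : seq nat).
Hypotheses (d_gt : {in d, forall y, t < y}) (v_lt : {in v, forall y, y < t}).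

Let subseq_block_split s : subseq s (t :: d ++ v) ->
  exists s1 s2, [/\ s = s1 ++ s2, subseq s1 (t :: d), subseq s2 v &
                    {in s1 & s2, forall y z, z < y}].
Proof.
move=> s_tdv; have [s1 [s2 [-> s1_td s2_v]]] := subseq_cat_split (d := t :: d) s_tdv.
exists s1, s2; split=> // y z y_s1 z_s2.
have := v_lt (mem_subseq s2_v z_s2); have := mem_subseq s1_td y_s1.
by rewrite inE => /predU1P[-> // | /d_gt]; lia.
Qed.

Lemma two_smaller_before_block :
  sorted gtn d -> ~ two_smaller_before v -> ~ two_smaller_before (t :: d ++ v).
Proof.
move=> d_decr no_tsb [a [b [c [/subseq_block_split[s1 [s2 [abc_eq s1_td s2_v sep]]] []]]]].
case: s2 abc_eq s2_v sep => [|z s2] abc_eq s2_v sep lt_ac lt_bc.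
  rewrite cats0 in abc_eq; rewrite -abc_eq in s1_td.
  have bc_d : subseq [:: b; c] d by move: s1_td => /=; case: eqP => // _ /cons_subseq.
  by have := subseq_sorted gtn_trans bc_d d_decr; rewrite /= andbT; lia.
case: s1 abc_eq s1_td sep => [|y s1] abc_eq _ sep.
  by apply: no_tsb; exists a, b, c; rewrite abc_eq.
have c_last : c = last z s2 by rewrite [c](congr1 (last 0) abc_eq) last_cat.
have a_head : a = y by case: abc_eq.
by have := sep y (last z s2) (mem_head _ _) (mem_last _ _); rewrite -c_last -a_head; lia.
Qed.

Lemma k_larger_after_block k :
  size d < k -> ~ k_larger_after k v -> ~ k_larger_after k (t :: d ++ v).
Proof.
move=> lt_dk no_kla [y [u [/subseq_block_split[s1 [s2 [yu_eq s1_td s2_v sep]]] size_u u_gt]]].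
case: s2 yu_eq s2_v sep => [|z s2] yu_eq s2_v sep.
  rewrite cats0 in yu_eq; rewrite -yu_eq in s1_td.
  have u_d : subseq u d by move: s1_td => /=; case: eqP => // _ /cons_subseq.
  by move: lt_dk; rewrite -size_u ltnNge size_subseq.
case: s1 yu_eq s1_td sep => [|y' s1] yu_eq _ sep.
  by apply: no_kla; exists y, u; rewrite yu_eq.
case: yu_eq sep => <- u_eq sep.
have z_u : z \in u by rewrite u_eq mem_cat mem_head orbT.
by have := sep y z (mem_head _ _) (mem_head _ _); have := allP u_gt z z_u; rewrite /=; lia.
Qed.

End BlockCat.

Lemma filter_cat_filterC (T : eqType) (P : pred T) (s : seq T) :
    (forall b c, subseq [:: b; c] s -> ~~ P b -> ~~ P c) ->
  [seq y <- s | P y] ++ [seq y <- s | ~~ P y] = s.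
Proof.
elim: s => //= y s IH P_s.
have {}IH : [seq y <- s | P y] ++ [seq y <- s | ~~ P y] = s.
  by apply: IH => b c bc_s; apply: P_s; apply: subseq_trans bc_s (subseq_cons s y).
case: (boolP (P y)) => /= [_ | nPy]; first by rewrite IH.
have nP_s : all (predC P) s by apply/allP => z z_s; apply: P_s nPy; rewrite /= eqxx sub1seq.
rewrite (all_filterP nP_s) (eq_in_filter (a2 := pred0)) ?filter_pred0 //.
by move=> z /(allP nP_s)/negbTE.
Qed.

Lemma admissible_cons_decomp k n x r :
    perm_eq (x :: r) (iota 0 n.+1) -> admissible k (x :: r) ->
  [/\ r = rev (iota x.+1 (n - x)) ++ [seq y <- r | y < x], n - x < k
    & perm_eq [seq y <- r | y < x] (iota 0 x)].
Proof.
move=> xr_perm [no_tsb no_kla].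
have /andP[x_notin_r r_uniq] : uniq (x :: r) by rewrite (perm_uniq xr_perm) iota_uniq.
have mem_r y : (y \in r) = (y <= n) && (y != x).
  have := perm_mem xr_perm y; rewrite inE mem_iota /= ltnS.
  by case: eqP => [-> | _] /= <-; rewrite ?(negbTE x_notin_r) ?andbT ?andbF.
have le_xn : x <= n by have := perm_mem xr_perm x; rewrite mem_head mem_iota; lia.
set u := [seq y <- r | x < y].
have r_eq : u ++ [seq y <- r | y < x] = r.
  rewrite -(eq_in_filter (a1 := fun y => ~~ (x < y))) => [|y]; last by rewrite mem_r; lia.
  apply: filter_cat_filterC => b c bc_r le_bx; apply/negP => lt_xc.
  apply: no_tsb; exists x, b, c; split; first by rewrite /= eqxx.
  by split=> //; lia.
have u_decr : sorted gtn u.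
  rewrite sorted_pairwise; last exact: gtn_trans.
  apply: subseq2_pairwise => b c bc_u.
  have : b != c by have := subseq_uniq bc_u (filter_uniq _ r_uniq); rewrite /= inE andbT.
  have : ~~ (b < c).
    apply/negP => lt_bc; apply: no_tsb; exists x, b, c; split.
      by rewrite /= eqxx; apply: subseq_trans bc_u (filter_subseq _ _).
    split=> //; have := mem_subseq bc_u (mem_last b [:: c]).
    by rewrite mem_filter => /andP[].
  by rewrite /=; lia.
have u_eq : u = rev (iota x.+1 (n - x)).
  apply: (irr_sorted_eq gtn_trans) => //; first by move=> y; rewrite /= ltnn.
    by rewrite rev_sorted; apply: iota_ltn_sorted.
  by move=> y; rewrite mem_filter mem_rev mem_iota mem_r; lia.
split.
- by rewrite -u_eq r_eq.
- rewrite ltnNge; apply/negP => le_kn; apply: no_kla; exists x, (take k u); split.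
  + by rewrite /= eqxx; apply: subseq_trans (take_subseq _ _) (filter_subseq _ _).
  + by rewrite size_takel // u_eq size_rev size_iota.
  + by apply/allP => y /mem_take; rewrite mem_filter => /andP[].
apply: uniq_perm; [exact: filter_uniq | exact: iota_uniq | ].
by move=> y; rewrite mem_filter mem_iota mem_r; lia.
Qed.

Definition block n t := t :: rev (iota t.+1 (n - t.+1)).

(* The admissible arrangements of [iota 0 n], grouped by their first entry;
   the result is only meaningful when [n <= fuel]. *)
Fixpoint words k fuel n : seq (seq nat) :=
  if fuel is fuel'.+1 then
    if n is 0 then [:: [::]]
    else [seq block n t ++ v | t <- index_iota (n - k) n, v <- words k fuel' t]
  else [:: [::]].

Lemma words_uniq k f n : uniq (words k f n).
Proof.
elim: f n => [|f IH] [|n] //=; apply: allpairs_uniq_dep => [||[t v] [t' v'] _ _ /=].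
- exact: iota_uniq.
- by move=> t _; apply: IH.
by case=> <- /eqP; rewrite eqseq_cat // => /andP[_ /eqP->].
Qed.

Lemma words_perm k f n w : n <= f -> w \in words k f n -> perm_eq w (iota 0 n).
Proof.
elim: f n w => [|f IH] [|n] w le_nf; try by rewrite /= inE => /eqP->.
case/allpairsPdep=> t [v [t_range v_words ->]]; rewrite mem_index_iota in t_range.
have -> : iota 0 n.+1 = iota 0 t ++ iota t (n.+1 - t) by rewrite -iotaD; congr iota; lia.
rewrite perm_catC; apply: perm_cat; first by apply: IH v_words; lia.
by rewrite /block (_ : n.+1 - t = (n - t).+1) 1?perm_cons ?perm_rev //; lia.
Qed.

Lemma words_admissible k f n w : n <= f -> w \in words k f n -> admissible k w.
Proof.
elim: f n w => [|f IH] [|n] w le_nf //; try by rewrite /= inE => /eqP->; apply: admissible_nil.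
case/allpairsPdep=> t [v [t_range v_words ->]]; rewrite mem_index_iota in t_range.
have le_tf : t <= f by lia.
have [no_tsb no_kla] := IH t v le_tf v_words.
have d_gt : {in rev (iota t.+1 (n.+1 - t.+1)), forall y, t < y}.
  by move=> y; rewrite mem_rev mem_iota; lia.
have v_lt : {in v, forall y, y < t}.
  by move=> y; rewrite (perm_mem (words_perm le_tf v_words)) mem_iota.
split; [apply: two_smaller_before_block | apply: k_larger_after_block] => //.
- by rewrite rev_sorted; apply: iota_ltn_sorted.
- by rewrite size_rev size_iota; lia.
Qed.

Lemma admissible_words k f n w :
  n <= f -> perm_eq w (iota 0 n) -> admissible k w -> w \in words k f n.
Proof.
elim: f n w => [|f IH] n w le_nf w_perm w_adm.
  by move: le_nf w_perm; rewrite leqn0 => /eqP-> /perm_size/size0nil->.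
case: n le_nf w_perm => [|n] le_nf w_perm; first by rewrite (size0nil (perm_size w_perm)).
case: w w_perm w_adm => [|x r] xr_perm xr_adm; first by move/perm_size: xr_perm.
have [r_eq lt_nk v_perm] := admissible_cons_decomp xr_perm xr_adm.
have le_xn : x <= n by have := perm_mem xr_perm x; rewrite mem_head mem_iota; lia.
apply/allpairsPdep; exists x, [seq y <- r | y < x]; split.
- by rewrite mem_index_iota; lia.
- apply: IH v_perm _; first lia.
  by apply: admissible_subseq xr_adm; apply: subseq_trans (filter_subseq _ _) (subseq_cons r x).
- by rewrite /block subSS {1}r_eq.
Qed.

Lemma mem_wordsP k f n w :
  n <= f -> w \in words k f n <-> perm_eq w (iota 0 n) /\ admissible k w.
Proof.
move=> le_nf; split=> [w_words | [w_perm w_adm]]; last exact: admissible_words.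
by split; [apply: words_perm w_words | apply: words_admissible w_words].
Qed.

Lemma a_size_words k f n : n <= f -> a k n = size (words k f n).
Proof.
move=> le_nf; rewrite /a cardE -(size_map (@perm_word n)); apply: perm_size.
apply: uniq_perm; [by rewrite map_inj_uniq ?enum_uniq //; apply: perm_word_inj | |].
  exact: words_uniq.
move=> w; apply/mapP/idP => [[p] | /(mem_wordsP _ _ le_nf) [w_perm w_adm]].
  rewrite mem_enum inE => /avoidsP p_adm ->.
  by apply/(mem_wordsP _ _ le_nf); split=> //; apply: perm_word_iota.
have [p p_w] := perm_word_surj w_perm.
by exists p => //; rewrite mem_enum inE; apply/avoidsP; rewrite p_w.
Qed.

Lemma a0 k : a k 0 = 1.
Proof. by rewrite (a_size_words k (leqnn 0)). Qed.

Lemma a_window_sum k n : a k n.+1 = \sum_(n.+1 - k <= t < n.+1) a k t.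
Proof.
rewrite (a_size_words k (leqnn n.+1)) /= size_allpairs_dep sumnE big_map.
by apply: eq_big_nat => t /andP[_ lt_tn]; rewrite (a_size_words k (_ : t <= n)).
Qed.

Lemma window_sum_step (u : nat -> nat) k m : 0 < k ->
    (forall n, u n.+1 = \sum_(n.+1 - k <= t < n.+1) u t) ->
  u m.+2 + (k <= m.+1) * u (m.+1 - k) = 2 * u m.+1.
Proof.
move=> k_gt0 u_rec; have := u_rec m.+1; rewrite big_nat_recr /=; last lia.
have := u_rec m; case: (leqP k m.+1) => [le_km | lt_mk].
  rewrite (big_ltn (_ : m.+1 - k < m.+1)); last lia.
  by rewrite (_ : (m.+1 - k).+1 = m.+2 - k); lia.
by rewrite (_ : m.+2 - k = m.+1 - k); lia.
Qed.

Import GRing.Theory.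
Local Open Scope ring_scope.

Lemma window_sum_series (R : nzRingType) (u : nat -> nat) k N :
    (0 < k)%N -> u 0%N = 1%N ->
    (forall n, u n.+1 = \sum_(n.+1 - k <= t < n.+1) u t)%N ->
  take_poly N ((1 - 2%:R *: 'X + 'X^(k.+1)) * \poly_(i < N) (u i)%:R : {poly R})
  = take_poly N (1 - 'X).
Proof.
move=> k_gt0 u0 u_rec; apply/polyP => j; rewrite !coef_take_poly; case: ifP => // lt_jN.
rewrite mulrDl mulrBl mul1r -scalerAl coefD coefB coefZ coefXM coefXnM !coef_poly.
rewrite coefB coef1 coefX lt_jN.
case: j lt_jN => [|[|m]] lt_jN /=.
- by rewrite u0 mulr0 !subr0 addr0.
- have u1 : u 1%N = 1%N by rewrite u_rec (_ : (1 - k = 0)%N) ?big_nat1 //; lia.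
  rewrite (ltnW lt_jN) ltnS k_gt0 u0 u1 mulr1n mulr1 addr0 sub0r.
  by rewrite mulr2n opprD addrA subrr sub0r.
have lt_mN : (m.+1 < N)%N by lia.
have := window_sum_step m k_gt0 u_rec.
rewrite lt_mN subr0 ltnS; case: (leqP k m.+1) => [le_km | _] /=.
  rewrite mul1n (_ : (m.+1 - k < N)%N) => [step|]; last lia.
  by rewrite addrAC -natrD step natrM subrr.
by rewrite mul0n addn0 addr0 => ->; rewrite natrM subrr.
Qed.

Unset Implicit Arguments.

Theorem mainTheorem1 (k : nat) (hk : (1 <= k)%N) (N : nat) :
  take_poly N ((1 - 2%:R *: 'X + 'X^(k.+1)) * \poly_(i < N) ((a k i)%:R : int))
  = take_poly N (1 - 'X).
Proof. exact: window_sum_series hk (a0 k) (a_window_sum k). Qed.
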